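(* Let $d,r,s$ be positive integers with $r\ge s$, let $c$ be an integer with $|c|\le d$, and let $a_1,\dots,a_r$ and $b_1,\dots,b_s$ be integers, none divisible by $3$, with $1\le a_i\le d$ and $1\le b_i\le d$ for all $i$. If $$a_1 3^{2rd}+a_2 3^{2(r-1)d}+\dots+a_r3^{2d}=b_13^{n_1}+b_23^{n_2}+\dots+b_s3^{n_s}+c$$ for integers $n_1>n_2>\dots>n_s\ge0$, then $r=s$, $c=0$, and $a_i=b_i$ and $n_i=2d(r+1-i)$ for $i=1,\dots,r$. *)

From Stdlib Require Import ZArith Lia.
Open Scope Z_scope.

Fixpoint zsum (f : nat -> Z) (m : nat) : Z :=
  match m with
  | O => 0
  | S k => zsum f k + f (S k)
  end.

From Stdlib Require Import ZArith Lia List Sorting.Sorted Classical.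
Import ListNotations.
Open Scope Z_scope.

(* A sum of terms a * 3^k with coefficients 1 <= a <= d prime to 3 is encoded
   as a list of (coefficient, exponent) pairs with strictly decreasing
   exponents.  The left-hand side of the theorem is a "ladder": r terms whose
   exponents e, e + 2d, ..., e + 2d(r-1) are spaced 2d apart.  We show that
   if a ladder equals an arbitrary admissible expansion B up to an error
   |c| <= d, then B has at least r terms, and exactly r only if B is the
   ladder itself and c = 0.

   The engine is a separation lemma: if no exponent lies in the d - 1 slots
   just below a threshold T, the parts of both sides below T are at most
   d 3^(T-d+1) / 2 <= 3^T / 2, so, as |c| <= d, the equation splits into an
   equation below T and an exact equation above T.  By strong induction on r: if some gap
   between consecutive rungs holds at most one exponent of B, a threshold
   fits in it and both halves are handled by induction; otherwise every gap
   holds two exponents of B, and counting them, together with the exponent e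
   that B must share with the ladder by 3-adic valuation, finishes the proof.
   The theorem is the instance e = 2d, after translating the indexed sums. *)

Definition coef_ok (d x : Z) : Prop := ~ (3 | x) /\ 1 <= x <= d.
Definition term_ok (d : Z) (p : Z * Z) : Prop := coef_ok d (fst p) /\ 0 <= snd p.
Definition exp_gt (p q : Z * Z) : Prop := snd q < snd p.
Definition admissible (d : Z) (l : list (Z * Z)) : Prop :=
  Forall (term_ok d) l /\ StronglySorted exp_gt l.

Fixpoint value (l : list (Z * Z)) : Z :=
  match l with [] => 0 | p :: l' => fst p * 3 ^ snd p + value l' end.

Lemma value_app l1 l2 : value (l1 ++ l2) = value l1 + value l2.
Proof. induction l1 as [|p l1 IH]; simpl; lia. Qed.

Lemma admissible_filter d f l : admissible d l -> admissible d (filter f l).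
Proof.
  intros [Hok Hsort]. split.
  - rewrite Forall_forall in Hok |- *. intros p Hp. apply filter_In in Hp. apply Hok; tauto.
  - clear Hok. induction Hsort as [|p l Hsort IH Hhd]; simpl; [constructor|].
    destruct (f p); [constructor|]; auto.
    rewrite Forall_forall in Hhd |- *. intros q Hq. apply filter_In in Hq. apply Hhd; tauto.
Qed.

Definition below (T : Z) (l : list (Z * Z)) := filter (fun p => snd p <? T) l.
Definition above (T : Z) (l : list (Z * Z)) := filter (fun p => T <=? snd p) l.

Lemma value_below_above T l : value l = value (below T l) + value (above T l).
Proof.
  induction l as [|p l IH]; simpl; [reflexivity|]. unfold below, above in *.
  destruct (Z.ltb_spec (snd p) T), (Z.leb_spec T (snd p)); simpl; lia.
Qed.

Lemma length_below_above T l : length l = (length (below T l) + length (above T l))%nat.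
Proof.
  induction l as [|p l IH]; simpl; [reflexivity|]. unfold below, above in *.
  destruct (Z.ltb_spec (snd p) T), (Z.leb_spec T (snd p)); simpl; lia.
Qed.

Lemma filter_all_true {A} (f : A -> bool) l :
  (forall x, In x l -> f x = true) -> filter f l = l.
Proof. induction l as [|x l IH]; simpl; intros H; [|rewrite H, IH]; auto. Qed.

Lemma filter_all_false {A} (f : A -> bool) l :
  (forall x, In x l -> f x = false) -> filter f l = [].
Proof. induction l as [|x l IH]; simpl; intros H; [|rewrite H, IH]; auto. Qed.

Lemma below_above_app T l1 l2 :
  (forall p, In p l1 -> T <= snd p) -> (forall p, In p l2 -> snd p < T) ->
  below T (l1 ++ l2) = l2 /\ above T (l1 ++ l2) = l1.
Proof.
  intros H1 H2. unfold below, above. rewrite !filter_app.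
  rewrite (filter_all_false _ l1), (filter_all_true _ l2).
  2:{ intros p Hp. apply Z.ltb_lt, H2, Hp. }
  2:{ intros p Hp. apply Z.ltb_ge, H1, Hp. }
  rewrite (filter_all_true _ l1), (filter_all_false _ l2), app_nil_r; [split; reflexivity| |].
  - intros p Hp. apply Z.leb_gt, H2, Hp.
  - intros p Hp. apply Z.leb_le, H1, Hp.
Qed.

Lemma above_below_app T l : StronglySorted exp_gt l -> l = above T l ++ below T l.
Proof.
  induction 1 as [|p l Hsort IH Hhd]; simpl; [reflexivity|]. unfold below, above in *.
  rewrite Forall_forall in Hhd. unfold exp_gt in Hhd.
  destruct (Z.leb_spec T (snd p)), (Z.ltb_spec (snd p) T); try lia; simpl.
  - f_equal; exact IH.
  - rewrite filter_all_false, filter_all_true; auto; intros q Hq; specialize (Hhd q Hq);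
      [apply Z.ltb_lt | apply Z.leb_gt]; lia.
Qed.

Lemma last_In {A} (l : list A) x0 : l <> [] -> In (last l x0) l.
Proof.
  induction l as [|x l IH]; intros H; [congruence|].
  destruct l as [|y l]; simpl; auto. right. apply IH. congruence.
Qed.

Lemma pow3_split m e : 0 <= m <= e -> 3 ^ e = 3 ^ m * 3 ^ (e - m).
Proof. intros. rewrite <- Z.pow_add_r by lia. f_equal. lia. Qed.

Lemma three_divides_pow m : 0 < m -> (3 | 3 ^ m).
Proof. intros. rewrite (pow3_split 1 m), Z.pow_1_r by lia. apply Z.divide_factor_l. Qed.

Lemma divide_small m x : (m | x) -> Z.abs x < Z.abs m -> x = 0.
Proof.
  intros Hdiv Hlt. destruct (Z.eq_dec x 0) as [|Hx]; auto.
  pose proof (Znumtheory.Zdivide_bounds m x Hdiv Hx). lia.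
Qed.

(* The 3-adic valuation of a nonempty admissible expansion is the exponent of
   its last term, which is the smallest one: the coefficient is prime to 3. *)
Lemma value_valuation d l : l <> [] -> admissible d l ->
  exists q, value l = 3 ^ snd (last l (0, 0)) * q /\ ~ (3 | q).
Proof.
  intros Hne [Hok Hsort]. induction Hsort as [|x l Hsort IH Hhd]; [congruence|].
  inversion Hok as [|? ? [[Hx _] _] Hok']; subst.
  destruct l as [|y l].
  - exists (fst x). simpl. split; [lia | exact Hx].
  - destruct IH as [q [Hq Hnq]]; auto; [congruence|].
    set (m := snd (last (y :: l) (0, 0))) in *.
    assert (Hin : In (last (y :: l) (0, 0)) (y :: l)) by (apply last_In; congruence).
    assert (Hm : m < snd x) by (rewrite Forall_forall in Hhd; apply (Hhd _ Hin)).
    assert (Hm0 : 0 <= m) by (rewrite Forall_forall in Hok'; apply (Hok' _ Hin)).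
    exists (fst x * 3 ^ (snd x - m) + q). split.
    + change (value (x :: y :: l)) with (fst x * 3 ^ snd x + value (y :: l)).
      change (last (x :: y :: l) (0, 0)) with (last (y :: l) (0, 0)). fold m.
      rewrite Hq, (pow3_split m (snd x)) by lia. ring.
    + intros H3. apply Hnq. apply (Z.divide_add_cancel_r _ (fst x * 3 ^ (snd x - m))); auto.
      apply Z.divide_mul_r, three_divides_pow. lia.
Qed.

Lemma valuation_lt m m' q q' : 0 <= m < m' -> 3 ^ m * q = 3 ^ m' * q' -> (3 | q).
Proof.
  intros Hm Heq. rewrite (pow3_split m m') in Heq by lia.
  assert (Hq : q = 3 ^ (m' - m) * q').
  { apply (Z.mul_reg_l _ _ (3 ^ m)); [apply Z.pow_nonzero; lia | lia]. }
  rewrite Hq. apply Z.divide_mul_l, three_divides_pow. lia.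
Qed.

Lemma lowest_exponent_eq d l l' : l <> [] -> l' <> [] -> admissible d l -> admissible d l' ->
  value l = value l' -> snd (last l (0, 0)) = snd (last l' (0, 0)).
Proof.
  intros Hne Hne' Hl Hl' Heq.
  destruct (value_valuation d l Hne Hl) as [q [Hq Hnq]].
  destruct (value_valuation d l' Hne' Hl') as [q' [Hq' Hnq']].
  assert (H0 : forall l0, l0 <> [] -> admissible d l0 -> 0 <= snd (last l0 (0, 0))).
  { intros l0 Hne0 [Hok _]. rewrite Forall_forall in Hok. apply Hok, last_In, Hne0. }
  pose proof (H0 l Hne Hl). pose proof (H0 l' Hne' Hl').
  set (m := snd (last l (0, 0))) in *. set (m' := snd (last l' (0, 0))) in *.
  destruct (Z.lt_trichotomy m m') as [Hlt|[Heqm|Hgt]]; auto; exfalso.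
  - apply Hnq, (valuation_lt m m' q q'); [lia | congruence].
  - apply Hnq', (valuation_lt m' m q' q); [lia | congruence].
Qed.

Lemma value_divisible T l : 0 <= T -> (forall p, In p l -> T <= snd p) -> (3 ^ T | value l).
Proof.
  intros HT. induction l as [|x l IH]; intros H; simpl; [apply Z.divide_0_r|].
  apply Z.divide_add_r; [|apply IH; intros; apply H; right; auto].
  apply Z.divide_mul_r. rewrite (pow3_split T (snd x)) by (specialize (H x (or_introl eq_refl)); lia).
  apply Z.divide_factor_l.
Qed.

Lemma value_bound d l N : 0 <= d -> admissible d l -> 0 <= N ->
  (forall p, In p l -> snd p < N) -> 0 <= value l /\ 2 * value l <= d * (3 ^ N - 1).
Proof.
  intros Hd [Hok Hsort]. revert N. induction Hsort as [|x l Hsort IH Hhd]; intros N HN Hlt.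
  - simpl. pose proof (Z.pow_pos_nonneg 3 N). nia.
  - inversion Hok as [|? ? [[_ Hx] Hx0] Hok']; subst.
    assert (HxN : snd x < N) by (apply Hlt; left; reflexivity).
    destruct (IH Hok' (snd x) Hx0) as [IH1 IH2].
    { rewrite Forall_forall in Hhd. exact Hhd. }
    assert (H3x : 3 ^ (snd x + 1) <= 3 ^ N) by (apply Z.pow_le_mono_r; lia).
    rewrite Z.pow_add_r, Z.pow_1_r in H3x by lia.
    pose proof (Z.pow_pos_nonneg 3 (snd x) ltac:(lia)).
    change (value (x :: l)) with (fst x * 3 ^ snd x + value l).
    split; nia.
Qed.

Definition avoids (lo hi : Z) (l : list (Z * Z)) : Prop :=
  forall p, In p l -> snd p < lo \/ hi <= snd p.

Lemma separation d T L B c : 1 <= d -> d <= T -> admissible d L -> admissible d B ->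
  avoids (T - d + 1) T L -> avoids (T - d + 1) T B -> Z.abs c <= d ->
  value L = value B + c ->
  value (below T L) = value (below T B) + c /\ value (above T L) = value (above T B).
Proof.
  intros Hd HT HL HB HavL HavB Hc Heq.
  assert (Hhigh : forall l, (3 ^ T | value (above T l))).
  { intros l. apply value_divisible; [lia|]. intros p Hp.
    apply filter_In in Hp. apply Z.leb_le, Hp. }
  assert (Hlow : forall l, admissible d l -> avoids (T - d + 1) T l ->
      0 <= value (below T l) /\ 2 * value (below T l) <= d * (3 ^ (T - d + 1) - 1)).
  { intros l Hl Hav. apply value_bound; [lia | apply admissible_filter, Hl | lia |].
    intros p Hp. apply filter_In in Hp. destruct Hp as [Hp HpT].
    apply Z.ltb_lt in HpT. specialize (Hav p Hp). lia. }
  rewrite (value_below_above T L), (value_below_above T B) in Heq.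
  destruct (Hlow L HL HavL) as [HL1 HL2]. destruct (Hlow B HB HavB) as [HB1 HB2].
  assert (Hdiff : value (below T B) + c - value (below T L) = 0).
  { apply (divide_small (3 ^ T)).
    - replace (value (below T B) + c - value (below T L))
        with (value (above T L) - value (above T B)) by lia.
      apply Z.divide_sub_r; apply Hhigh.
    - assert (H3 : 3 <= 3 ^ (T - d + 1)).
      { rewrite <- (Z.pow_1_r 3) at 1. apply Z.pow_le_mono_r; lia. }
      assert (Hd3 : d <= 3 ^ (d - 1)).
      { pose proof (Z.pow_gt_lin_r 3 (d - 1) ltac:(lia) ltac:(lia)). lia. }
      rewrite (pow3_split (T - d + 1) T) by lia.
      replace (T - (T - d + 1)) with (d - 1) by lia.
      set (P := 3 ^ (T - d + 1)) in *. set (Q := 3 ^ (d - 1)) in *.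
      rewrite (Z.abs_eq (P * Q)) by nia. apply Z.abs_lt. split; nia. }
  lia.
Qed.

Definition count_in (lo hi : Z) (l : list (Z * Z)) : nat :=
  length (filter (fun p => andb (lo <=? snd p) (snd p <? hi)) l).

Lemma count_in_le_length lo hi l : (count_in lo hi l <= length l)%nat.
Proof. apply filter_length_le. Qed.

Lemma count_in_In lo hi l p : In p l -> lo <= snd p < hi -> (1 <= count_in lo hi l)%nat.
Proof.
  intros Hp Hlh. unfold count_in.
  assert (Hf : In p (filter (fun p => andb (lo <=? snd p) (snd p <? hi)) l)).
  { apply filter_In. split; auto. apply andb_true_intro. split; [apply Z.leb_le | apply Z.ltb_lt]; lia. }
  destruct (filter _ l); [destruct Hf | simpl; lia].
Qed.

Lemma count_in_split lo m1 m2 hi l : lo <= m1 <= m2 -> m2 <= hi ->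
  (count_in lo m1 l + count_in m2 hi l <= count_in lo hi l)%nat.
Proof.
  intros H1 H2. unfold count_in. induction l as [|p l IH]; simpl; [lia|].
  destruct (Z.leb_spec lo (snd p)), (Z.ltb_spec (snd p) m1),
    (Z.leb_spec m2 (snd p)), (Z.ltb_spec (snd p) hi); simpl; lia.
Qed.

Lemma count_in_zero lo hi l : count_in lo hi l = 0%nat -> avoids lo hi l.
Proof.
  intros H0 p Hp. destruct (Z.lt_ge_cases (snd p) lo); [left; auto|].
  destruct (Z.lt_ge_cases (snd p) hi); [|right; auto].
  pose proof (count_in_In lo hi l p Hp ltac:(lia)). lia.
Qed.

Lemma count_windows lo D m l : 1 <= D ->
  (forall j, (j < m)%nat ->
     (2 <= count_in (lo + Z.of_nat j * D) (lo + Z.of_nat j * D + D - 1) l)%nat) ->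
  (2 * m <= count_in lo (lo + Z.of_nat m * D) l)%nat.
Proof.
  intros HD. induction m as [|m IH]; intros Hw; [lia|].
  pose proof (IH (fun j Hj => Hw j ltac:(lia))) as Hprev.
  pose proof (Hw m ltac:(lia)) as Hlast.
  pose proof (count_in_split lo (lo + Z.of_nat m * D) (lo + Z.of_nat m * D)
    (lo + Z.of_nat (S m) * D) l ltac:(nia) ltac:(nia)) as Hsplit.
  pose proof (count_in_split (lo + Z.of_nat m * D) (lo + Z.of_nat m * D + D - 1)
    (lo + Z.of_nat (S m) * D) (lo + Z.of_nat (S m) * D) l ltac:(lia) ltac:(lia)) as Hsub.
  lia.
Qed.

Lemma sparse_window_gap d lo l : 1 <= d -> (count_in lo (lo + 2 * d - 1) l <= 1)%nat ->
  exists T, lo + d - 1 <= T <= lo + 2 * d - 1 /\ avoids (T - d + 1) T l.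
Proof.
  intros Hd Hsparse.
  pose proof (count_in_split lo (lo + d - 1) (lo + d) (lo + 2 * d - 1) l
    ltac:(lia) ltac:(lia)) as Hhalves.
  destruct (count_in lo (lo + d - 1) l) eqn:Hleft.
  - exists (lo + d - 1). split; [lia|].
    replace (lo + d - 1 - d + 1) with lo by lia. apply count_in_zero, Hleft.
  - exists (lo + 2 * d - 1). split; [lia|].
    replace (lo + 2 * d - 1 - d + 1) with (lo + d) by lia. apply count_in_zero. lia.
Qed.

Fixpoint ladder (D e : Z) (A : list Z) : list (Z * Z) :=
  match A with
  | [] => []
  | x :: A' => (x, e + D * Z.of_nat (length A')) :: ladder D e A'
  end.

Lemma ladder_app D e A1 A2 :
  ladder D e (A1 ++ A2) = ladder D (e + D * Z.of_nat (length A2)) A1 ++ ladder D e A2.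
Proof.
  induction A1 as [|x A1 IH]; simpl; [reflexivity|].
  rewrite IH, length_app, Nat2Z.inj_add. f_equal. f_equal. ring.
Qed.

Lemma ladder_bounds D e A p : 0 <= D -> In p (ladder D e A) ->
  e <= snd p <= e + D * (Z.of_nat (length A) - 1).
Proof.
  intros HD. induction A as [|x A IH]; cbn [ladder In]; [tauto|].
  change (length (x :: A)) with (S (length A)). rewrite Nat2Z.inj_succ.
  intros [<-|Hp]; cbn [snd]; [nia|]. specialize (IH Hp). nia.
Qed.

Lemma ladder_last D e A : A <> [] -> snd (last (ladder D e A) (0, 0)) = e.
Proof.
  induction A as [|x A IH]; intros Hne; [congruence|].
  destruct A as [|y A]; [simpl; lia|].
  transitivity (snd (last (ladder D e (y :: A)) (0, 0))); [reflexivity | apply IH; congruence].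
Qed.

Lemma ladder_admissible d D e A : 0 < D -> 0 <= e -> Forall (coef_ok d) A ->
  admissible d (ladder D e A).
Proof.
  intros HD He. induction A as [|x A IH]; intros HA; [split; constructor|].
  inversion HA as [|? ? Hx HA']; subst. destruct (IH HA') as [Hok Hsort].
  split; constructor; auto.
  - split; simpl; [exact Hx | nia].
  - apply Forall_forall. intros p Hp. unfold exp_gt. simpl.
    pose proof (ladder_bounds D e A p ltac:(lia) Hp). nia.
Qed.

Lemma ladder_cut d e A1 A2 j T : 1 <= d -> length A2 = S j ->
  e + Z.of_nat j * (2 * d) + d <= T <= e + Z.of_nat (S j) * (2 * d) ->
  avoids (T - d + 1) T (ladder (2 * d) e (A1 ++ A2)) /\
  below T (ladder (2 * d) e (A1 ++ A2)) = ladder (2 * d) e A2 /\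
  above T (ladder (2 * d) e (A1 ++ A2)) = ladder (2 * d) (e + 2 * d * Z.of_nat (S j)) A1.
Proof.
  intros Hd HlA2 HT. rewrite ladder_app, HlA2.
  assert (Hup : forall p, In p (ladder (2 * d) (e + 2 * d * Z.of_nat (S j)) A1) -> T <= snd p).
  { intros p Hp. pose proof (ladder_bounds (2 * d) _ _ p ltac:(lia) Hp). nia. }
  assert (Hdown : forall p, In p (ladder (2 * d) e A2) -> snd p < T - d + 1).
  { intros p Hp. pose proof (ladder_bounds (2 * d) _ _ p ltac:(lia) Hp) as Hb.
    rewrite HlA2 in Hb. nia. }
  destruct (below_above_app T _ _ Hup (fun p Hp => ltac:(pose proof (Hdown p Hp); lia)))
    as [Hbelow Habove].
  rewrite Hbelow, Habove. repeat split.
  intros p Hp. apply in_app_or in Hp as [Hp|Hp]; [right; apply Hup | left; apply Hdown]; exact Hp.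
Qed.

Lemma single_rung e a b c : 0 <= e -> Z.abs c < 3 ^ e ->
  a * 3 ^ e = b * 3 ^ e + c -> c = 0 /\ a = b.
Proof.
  intros He Hc Heq.
  assert (Hc0 : c = 0).
  { apply (divide_small (3 ^ e)); [exists (a - b); lia | rewrite (Z.abs_eq (3 ^ e)); lia]. }
  split; [exact Hc0|]. subst c.
  apply (Z.mul_reg_r _ _ (3 ^ e)); [apply Z.pow_nonzero|]; lia.
Qed.

Definition ladder_rigid (d : Z) (r : nat) : Prop :=
  forall A e c B, length A = r -> 2 * d <= e -> Forall (coef_ok d) A -> admissible d B ->
    Z.abs c <= d -> value (ladder (2 * d) e A) = value B + c ->
    (r <= length B)%nat /\ (length B = r -> c = 0 /\ B = ladder (2 * d) e A).

(* The number of exponents of B strictly between the rungs e + 2dj and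
   e + 2d(j+1). *)
Definition between_rungs (d e : Z) (B : list (Z * Z)) (j : nat) : nat :=
  count_in (e + 1 + Z.of_nat j * (2 * d)) (e + 1 + Z.of_nat j * (2 * d) + 2 * d - 1) B.

Section Rigidity.

Variable d : Z.
Hypothesis Hd : 1 <= d.

Lemma ladder_rigid_0 : ladder_rigid d 0.
Proof.
  intros A e c B HA _ _ _ _ Heq. apply length_zero_iff_nil in HA. subst A.
  split; [lia|]. intros HB. apply length_zero_iff_nil in HB. subst B. simpl in *. split; auto.
Qed.

Section Instance.

Variables (A : list Z) (e c : Z) (B : list (Z * Z)).
Hypotheses (He : 2 * d <= e) (HA : Forall (coef_ok d) A) (HB : admissible d B)
  (Hc : Z.abs c <= d) (Heq : value (ladder (2 * d) e A) = value B + c).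

(* If B has at most one exponent in [1, 2d), then B contains the lowest rung
   exponent e: separating at a threshold T <= 2d <= e leaves the whole ladder
   equal to the high part of B, whose valuation must then be e. *)
Lemma bottom_rung : A <> [] -> (count_in 1 (2 * d) B <= 1)%nat ->
  exists p, In p B /\ snd p = e.
Proof.
  intros HAne Hsparse. set (L := ladder (2 * d) e A).
  replace (2 * d) with (1 + 2 * d - 1) in Hsparse by lia.
  destruct (sparse_window_gap d 1 B Hd Hsparse) as [T [HT HavB]].
  assert (HL : admissible d L) by (apply ladder_admissible; auto; lia).
  assert (HLT : forall p, In p L -> T <= snd p).
  { intros p Hp. pose proof (ladder_bounds (2 * d) e A p ltac:(lia) Hp). lia. }
  assert (HavL : avoids (T - d + 1) T L) by (intros p Hp; right; auto).
  destruct (separation d T L B c Hd ltac:(lia) HL HB HavL HavB Hc Heq) as [_ Hhigh].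
  unfold above at 1 in Hhigh.
  rewrite (filter_all_true _ L) in Hhigh by (intros p Hp; apply Z.leb_le, HLT, Hp).
  assert (HLne : L <> []) by (unfold L; destruct A; simpl; congruence).
  assert (HLlast : snd (last L (0, 0)) = e) by (apply ladder_last, HAne).
  destruct (value_valuation d L HLne HL) as [q [Hq Hnq]]. rewrite HLlast in Hq.
  assert (Hhne : above T B <> []).
  { intros Hnil. rewrite Hnil in Hhigh. simpl in Hhigh.
    apply Hnq. replace q with 0; [apply Z.divide_0_r|].
    symmetry. apply (Z.mul_reg_l _ _ (3 ^ e)); [apply Z.pow_nonzero; lia | lia]. }
  exists (last (above T B) (0, 0)). split.
  - apply (filter_In (fun p => T <=? snd p) _ B), last_In, Hhne.
  - rewrite <- HLlast. symmetry. apply (lowest_exponent_eq d); auto.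
    apply admissible_filter, HB.
Qed.

(* Every gap between rungs holds two exponents of B: then B has at least
   2(r - 1) + 1 >= r terms, and exactly r only when r = 1, B = [(b, e)]. *)
Lemma rigid_dense : A <> [] ->
  (forall j, (S j < length A)%nat ->
     (2 <= between_rungs d e B j)%nat) ->
  (length A <= length B)%nat /\ (length B = length A -> c = 0 /\ B = ladder (2 * d) e A).
Proof.
  intros HAne Hdense. set (r := length A) in *.
  assert (Hr : (1 <= r)%nat) by (unfold r; destruct A; [congruence | simpl; lia]).
  set (top := e + 1 + Z.of_nat (r - 1) * (2 * d)).
  assert (Hwindows : (2 * (r - 1) <= count_in (e + 1) top B)%nat).
  { apply count_windows; [lia|]. intros j Hj. apply Hdense. lia. }
  destruct (le_lt_dec (count_in 1 (2 * d) B) 1) as [Hsparse | Hbottom].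
  - destruct (bottom_rung HAne Hsparse) as [p [Hp Hpe]].
    pose proof (count_in_In e (e + 1) B p Hp ltac:(lia)).
    pose proof (count_in_split e (e + 1) (e + 1) top B ltac:(lia) ltac:(nia)).
    pose proof (count_in_le_length e top B).
    split; [lia|]. intros Hlen.
    assert (Hr1 : r = 1%nat) by lia. unfold r in Hr1, Hlen.
    destruct A as [|a [|? ?]]; [congruence | | discriminate].
    destruct B as [|p' [|? ?]]; [discriminate | | discriminate].
    destruct Hp as [->|[]]. destruct p as [b ep]. simpl in Hpe. subst ep.
    cbn [ladder value length fst snd Z.of_nat] in Heq |- *.
    rewrite Z.mul_0_r, !Z.add_0_r in Heq; rewrite Z.mul_0_r, Z.add_0_r.
    assert (Hpow : d < 3 ^ e) by (pose proof (Z.pow_gt_lin_r 3 e); lia).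
    destruct (single_rung e a b c ltac:(lia) ltac:(lia) Heq) as [-> ->].
    split; reflexivity.
  - pose proof (count_in_split 1 (2 * d) (e + 1) top B ltac:(lia) ltac:(nia)).
    pose proof (count_in_le_length 1 top B).
    split; lia.
Qed.

(* Some gap between rungs holds at most one exponent of B: separate there and
   apply rigidity to the two shorter ladders. *)
Lemma rigid_sparse j : (forall k, (k < length A)%nat -> ladder_rigid d k) ->
  (S j < length A)%nat ->
  (between_rungs d e B j <= 1)%nat ->
  (length A <= length B)%nat /\ (length B = length A -> c = 0 /\ B = ladder (2 * d) e A).
Proof.
  intros IH Hj Hsparse.
  destruct (sparse_window_gap d _ B Hd Hsparse) as [T [HT HavB]].
  set (A1 := firstn (length A - S j) A). set (A2 := skipn (length A - S j) A).
  assert (HA12 : A = A1 ++ A2) by (symmetry; apply firstn_skipn).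
  assert (HlA1 : length A1 = (length A - S j)%nat) by (unfold A1; rewrite length_firstn; lia).
  assert (HlA2 : length A2 = S j) by (unfold A2; rewrite length_skipn; lia).
  assert (HA1 : Forall (coef_ok d) A1) by (rewrite HA12 in HA; apply Forall_app in HA; tauto).
  assert (HA2 : Forall (coef_ok d) A2) by (rewrite HA12 in HA; apply Forall_app in HA; tauto).
  destruct (ladder_cut d e A1 A2 j T Hd HlA2 ltac:(lia)) as (HavL & Hbelow & Habove).
  rewrite <- HA12 in HavL, Hbelow, Habove.
  destruct (separation d T _ B c Hd ltac:(nia)
    (ladder_admissible d (2 * d) e A ltac:(lia) ltac:(lia) HA) HB HavL HavB Hc Heq)
    as [Hlow Hhigh].
  rewrite Hbelow in Hlow. rewrite Habove in Hhigh.
  destruct (IH (S j) ltac:(lia) A2 e c (below T B) HlA2 He HA2 (admissible_filter _ _ _ HB)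
    Hc Hlow) as [Hlo_len Hlo_eq].
  destruct (IH (length A - S j)%nat ltac:(lia) A1 (e + 2 * d * Z.of_nat (S j)) 0 (above T B) HlA1 ltac:(nia) HA1
    (admissible_filter _ _ _ HB) ltac:(lia) ltac:(lia)) as [Hhi_len Hhi_eq].
  pose proof (length_below_above T B).
  split; [lia|]. intros Hlen.
  destruct (Hlo_eq ltac:(lia)) as [Hc0 HBlo]. destruct (Hhi_eq ltac:(lia)) as [_ HBhi].
  split; [exact Hc0|].
  rewrite (above_below_app T B (proj2 HB)), HBlo, HBhi, HA12, ladder_app, HlA2. reflexivity.
Qed.

End Instance.

Theorem ladder_rigidity r : ladder_rigid d r.
Proof.
  induction r as [r IH] using lt_wf_ind.
  intros A e c B HA He HAok HB Hc Heq. subst r.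
  destruct (list_eq_dec Z.eq_dec A []) as [-> | HAne].
  { exact (ladder_rigid_0 [] e c B eq_refl He HAok HB Hc Heq). }
  destruct (classic (exists j, (S j < length A)%nat /\
      (between_rungs d e B j <= 1)%nat))
    as [[j [Hj Hsparse]] | Hnone].
  - exact (rigid_sparse A e c B He HAok HB Hc Heq j IH Hj Hsparse).
  - apply (rigid_dense A e c B He HAok HB Hc Heq HAne).
    intros j Hj. apply Nat.nle_gt. intros Hsparse. apply Hnone. exists j. split; auto; lia.
Qed.

End Rigidity.

Lemma zsum_value (u v : nat -> Z) m :
  zsum (fun i => u i * 3 ^ v i) m = value (map (fun i => (u i, v i)) (seq 1 m)).
Proof.
  induction m as [|m IH]; [reflexivity|].
  rewrite seq_S, map_app, value_app. cbn [zsum]. rewrite IH.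
  replace (1 + m)%nat with (S m) by lia. simpl. lia.
Qed.

Lemma ladder_seq D e (a : nat -> Z) k m :
  ladder D e (map a (seq k m)) =
  map (fun i => (a i, e + D * Z.of_nat (k + m - 1 - i))) (seq k m).
Proof.
  revert k. induction m as [|m IH]; intros k; [reflexivity|].
  cbn [seq map ladder]. rewrite IH, length_map, length_seq. f_equal.
  - do 3 f_equal. lia.
  - apply map_ext_in. intros i Hi%in_seq. do 4 f_equal. lia.
Qed.

Lemma chain_admissible d (b n : nat -> Z) s :
  (forall i, (1 <= i <= s)%nat -> coef_ok d (b i)) ->
  (forall i, (1 <= i < s)%nat -> n (S i) < n i) -> 0 <= n s ->
  admissible d (map (fun i => (b i, n i)) (seq 1 s)).
Proof.
  intros Hb Hn Hns.
  assert (Hge : forall t i, (i + t = s)%nat -> (1 <= i)%nat -> n s <= n i).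
  { induction t as [|t IH]; intros i Hit Hi; [subst s; rewrite Nat.add_0_r; lia|].
    specialize (IH (S i) ltac:(lia) ltac:(lia)). pose proof (Hn i ltac:(lia)). lia. }
  split.
  - apply Forall_forall. intros p Hp. apply in_map_iff in Hp as [i [<- Hi%in_seq]].
    split; [apply Hb; lia | simpl; pose proof (Hge (s - i)%nat i ltac:(lia) ltac:(lia)); lia].
  - apply Sorted_StronglySorted; [unfold Relations_1.Transitive, exp_gt; intros; lia|].
    assert (Hloc : forall k m, (1 <= k)%nat -> (k + m <= s + 1)%nat ->
        Sorted exp_gt (map (fun i => (b i, n i)) (seq k m))).
    { intros k m. revert k. induction m as [|m IH]; intros k Hk Hkm; [constructor|].
      cbn [seq map]. constructor; [apply IH; lia|].
      destruct m as [|m]; constructor. unfold exp_gt. simpl. apply Hn. lia. }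
    apply Hloc; lia.
Qed.

Theorem lemma2p2 (d r s : nat) (c : Z) (a b : nat -> Z) (n : nat -> Z) :
  (0 < d)%nat -> (0 < r)%nat -> (0 < s)%nat -> (s <= r)%nat ->
  Z.abs c <= Z.of_nat d ->
  (forall i, (1 <= i <= r)%nat ->
     ~ (3 | a i) /\ 1 <= a i <= Z.of_nat d) ->
  (forall i, (1 <= i <= s)%nat ->
     ~ (3 | b i) /\ 1 <= b i <= Z.of_nat d) ->
  (forall i, (1 <= i < s)%nat -> n i > n (S i)) ->
  n s >= 0 ->
  zsum (fun i => a i * 3 ^ (2 * Z.of_nat (r + 1 - i) * Z.of_nat d)) r
    = zsum (fun i => b i * 3 ^ (n i)) s + c ->
  r = s /\ c = 0 /\
  (forall i, (1 <= i <= r)%nat ->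
     a i = b i /\ n i = 2 * Z.of_nat d * Z.of_nat (r + 1 - i)).
Proof.
  intros Hd _ _ Hsr Hc Ha Hb Hn Hns Heq.
  set (A := map a (seq 1 r)). set (B := map (fun i => (b i, n i)) (seq 1 s)).
  assert (HlA : length A = r) by (unfold A; rewrite length_map, length_seq; reflexivity).
  assert (HlB : length B = s) by (unfold B; rewrite length_map, length_seq; reflexivity).
  assert (HL : ladder (2 * Z.of_nat d) (2 * Z.of_nat d) A =
      map (fun i => (a i, 2 * Z.of_nat (r + 1 - i) * Z.of_nat d)) (seq 1 r)).
  { unfold A. rewrite ladder_seq. apply map_ext_in. intros i Hi%in_seq. f_equal.
    replace (r + 1 - i)%nat with (S (1 + r - 1 - i)) by lia.
    rewrite Nat2Z.inj_succ. ring. }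
  assert (HA : Forall (coef_ok (Z.of_nat d)) A).
  { apply Forall_forall. intros x Hx. apply in_map_iff in Hx as [i [<- Hi%in_seq]]. apply Ha. lia. }
  assert (HB : admissible (Z.of_nat d) B).
  { apply chain_admissible; [exact Hb | intros i Hi; apply Z.gt_lt, Hn, Hi | lia]. }
  assert (Hval : value (ladder (2 * Z.of_nat d) (2 * Z.of_nat d) A) = value B + c).
  { rewrite HL. unfold B. rewrite <- !zsum_value. exact Heq. }
  destruct (ladder_rigidity (Z.of_nat d) ltac:(lia) r A (2 * Z.of_nat d) c B HlA ltac:(lia)
    HA HB Hc Hval) as [Hle Hcase].
  assert (Hrs : s = r) by lia.
  destruct (Hcase ltac:(lia)) as [Hc0 HBL]. split; [lia|]. split; [exact Hc0|].
  intros i Hi. rewrite HL in HBL. unfold B in HBL. rewrite Hrs, map_ext_in_iff in HBL.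
  pose proof (HBL i ltac:(apply in_seq; lia)) as Hpair.
  pose proof (f_equal fst Hpair) as Hbi. pose proof (f_equal snd Hpair) as Hni.
  cbn [fst snd] in Hbi, Hni. split; [lia | rewrite Hni; ring].
Qed.
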